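(* Let $d=d(n)$, and let $X=X(n)\in\mathbb{R}^d$ and $Y=Y(n)\in\mathbb{R}^d$ be sequences of random vectors defined on a common probability space. Let $a_n,b_n$ be sequences of real constants and let $F$ be a continuous cdf. Suppose that for every $x\in\mathbb{R}$ with $0<F(x)<1$: (1) ${\sf Pr}(\max_{i\in[d]}Y_i\le a_n+b_nx)\to F(x)$ as $n\to\infty$; and (2) for every fixed $\varepsilon>0$, $\sum_{i=1}^d{\sf Pr}(|X_i-Y_i|>\varepsilon b_n)=o(1)$. Then ${\sf Pr}(\max_{i\in[d]}X_i\le a_n+b_nx)\to F(x)$ for all $x\in\mathbb{R}$. *)

From HB Require Import structures.
From mathcomp Require Import all_boot all_order all_algebra.
From mathcomp Require Import all_classical all_reals all_analysis.
Set Implicit Arguments. Unset Strict Implicit. Unset Printing Implicit Defensive.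
Import Order.TTheory GRing.Theory Num.Theory.
Import numFieldNormedType.Exports.
Local Open Scope classical_set_scope.
Local Open Scope ring_scope.

Definition is_cdf (R : realType) (F : R -> R) : Prop :=
  [/\ {homo F : x y / x <= y},
      F @ -oo --> (0 : R),
      F @ +oo --> (1 : R) &
      forall x : R, F x @[x --> x^'+] --> F x].

(* max_{i in [m]} v_i as an extended real (equal to -oo when m = 0). *)
Definition emax (R : realType) (m : nat) (v : 'I_m -> R) : \bar R :=
  \big[Order.max/-oo%E]_(i < m) (v i)%:E.

From HB Require Import structures.
From mathcomp Require Import all_boot all_order all_algebra.
From mathcomp Require Import all_classical all_reals all_analysis.
From mathcomp Require Import lra measurable_realfun.
Set Implicit Arguments.
Unset Strict Implicit.
Unset Printing Implicit Defensive.

Import Order.TTheory GRing.Theory Num.Theory.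
Import numFieldNormedType.Exports.
Import Num.Def.
Local Open Scope classical_set_scope.
Local Open Scope ring_scope.

(* Write G_n(x), H_n(x) for the probabilities that max X, resp. max Y, is at
   most a_n + b_n x, and s_n(d) for the sum in (2) with eps = d.  If every
   coordinate satisfies |X_i - Y_i| <= d b_n, then max X <= a_n + b_n x forces
   max Y <= a_n + b_n (x + d), and conversely with x - d; the union bound gives
     G_n(x) <= H_n(x + d) + s_n(d)   and   H_n(x - d) <= G_n(x) + s_n(d),
   whatever the sign of b_n.  Given e > 0, continuity of F and the intermediate
   value theorem provide z > x with F(z) in (0, 1) and F(z) < F(x) + e (and
   symmetrically z < x), so (1) applies at z, and letting n -> oo squeezes
   G_n(x) into (F(x) - e, F(x) + e). *)

Section continuous_cdf.
Variables (R : realType) (F : R -> R).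
Hypotheses (cdfF : is_cdf F) (contF : continuous F).

Lemma cdf_ge0 x : 0 <= F x.
Proof.
case: cdfF => monoF F0 _ _; apply: (cvgr_to_le F0).
by near=> y; apply: monoF; near: y; exact: nbhs_ninfty_le (num_real x).
Unshelve. all: by end_near.
Qed.

Lemma cdf_le1 x : F x <= 1.
Proof.
case: cdfF => monoF _ F1 _; apply: (cvgr_to_ge F1).
by near=> y; apply: monoF; near: y; exact: nbhs_pinfty_ge (num_real x).
Unshelve. all: by end_near.
Qed.

Lemma cdf_attains_above x v : F x < v < 1 -> exists2 z, x < z & F z = v.
Proof.
case/andP=> Fxv v1; case: cdfF => _ _ F1 _.
have [z [xz vFz]] : exists z, x <= z /\ v < F z.
  near (+oo : set_system R) => z; exists z; split; near: z.
  - exact: nbhs_pinfty_ge (num_real x).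
  - exact: cvgr_gt F1 _ v1.
have [c cxz Fc] : exists2 c, c \in `[x, z] & F c = v.
  apply: IVT xz (continuous_subspaceT contF) _.
  by rewrite ge_min le_max (ltW Fxv) (ltW vFz) orbT.
exists c => //; move: cxz; rewrite in_itv /= => /andP[xc _].
by rewrite lt_neqAle xc andbT; apply: contraTneq Fxv => ->; rewrite Fc ltxx.
Unshelve. all: by end_near.
Qed.

Lemma cdf_attains_below x v : 0 < v < F x -> exists2 z, z < x & F z = v.
Proof.
case/andP=> v0 vFx; case: cdfF => _ F0 _ _.
have [z [zx Fzv]] : exists z, z <= x /\ F z < v.
  near (-oo : set_system R) => z; exists z; split; near: z.
  - exact: nbhs_ninfty_le (num_real x).
  - exact: cvgr_lt F0 _ v0.
have [c czx Fc] : exists2 c, c \in `[z, x] & F c = v.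
  apply: IVT zx (continuous_subspaceT contF) _.
  by rewrite ge_min le_max (ltW Fzv) (ltW vFx) orbT.
exists c => //; move: czx; rewrite in_itv /= => /andP[_ cx].
by rewrite lt_neqAle cx andbT; apply: contraTneq vFx => <-; rewrite Fc ltxx.
Unshelve. all: by end_near.
Qed.

Lemma cdf_interior_point : exists x, 0 < F x < 1.
Proof.
have [F0|F0] := ltP (F 0) (1 / 2).
  have [|z _ Fz] := @cdf_attains_above 0 (1 / 2); last by exists z; rewrite Fz; lra.
  by apply/andP; split; lra.
have [|z _ Fz] := @cdf_attains_below 0 (1 / 4); last by exists z; rewrite Fz; lra.
by apply/andP; split; lra.
Qed.

Section shifted_sandwich.
Variables (G H s : nat -> R -> R).
Hypotheses (G01 : forall n x, 0 <= G n x <= 1)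
  (G_ub : forall n x d, G n x <= H n (x + d) + s n d)
  (G_lb : forall n x d, H n (x - d) <= G n x + s n d)
  (cvgH : forall x, 0 < F x < 1 -> H ^~ x @ \oo --> F x)
  (cvgs : forall d, 0 < d -> s ^~ d @ \oo --> 0).

Lemma shifted_sandwich_ub x e : 0 < e -> \forall n \near \oo, G n x < F x + e.
Proof.
move=> e0; have [Fx1|Fx1] := leP 1 (F x).
  by near=> n; have /andP[_ Gn1] := G01 n x; lra.
pose m := minr e (1 - F x).
have [m0 me m1] : [/\ 0 < m, m <= e & m <= 1 - F x].
  by rewrite lt_min e0 subr_gt0 !ge_min !lexx ?orbT.
have [z xz Fz] : exists2 z, x < z & F z = F x + m / 2.
  by apply: cdf_attains_above; apply/andP; split; lra.
have Fz01 : 0 < F z < 1 by have := cdf_ge0 x; rewrite Fz; lra.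
have : H ^~ z + s ^~ (z - x) @ \oo --> F z + 0.
  by apply: cvgD; [exact: cvgH | apply: cvgs; rewrite subr_gt0].
move=> /cvgr_lt /(_ (F x + e)) ub; near=> n.
have := G_ub n x (z - x); rewrite subrKC.
have : H n z + s n (z - x) < F x + e by near: n; apply: ub; lra.
lra.
Unshelve. all: by end_near.
Qed.

Lemma shifted_sandwich_lb x e : 0 < e -> \forall n \near \oo, F x - e < G n x.
Proof.
move=> e0; have [Fx0|Fx0] := leP (F x) 0.
  by near=> n; have /andP[Gn0 _] := G01 n x; lra.
pose m := minr e (F x).
have [m0 me m1] : [/\ 0 < m, m <= e & m <= F x].
  by rewrite lt_min e0 Fx0 !ge_min !lexx ?orbT.
have [z zx Fz] : exists2 z, z < x & F z = F x - m / 2.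
  by apply: cdf_attains_below; apply/andP; split; lra.
have Fz01 : 0 < F z < 1 by have := cdf_le1 x; rewrite Fz; lra.
have : H ^~ z - s ^~ (x - z) @ \oo --> F z - 0.
  by apply: cvgB; [exact: cvgH | apply: cvgs; rewrite subr_gt0].
move=> /cvgr_gt /(_ (F x - e)) lb; near=> n.
have := G_lb n x (x - z); rewrite opprB subrKC.
have : F x - e < H n z - s n (x - z) by near: n; apply: lb; lra.
lra.
Unshelve. all: by end_near.
Qed.

Lemma shifted_sandwich_cvg x : G ^~ x @ \oo --> F x.
Proof.
apply/cvgrPdist_lt => e e0; near=> n; rewrite distrC ltr_distl.
by apply/andP; split; near: n; [exact: shifted_sandwich_lb | exact: shifted_sandwich_ub].
Unshelve. all: by end_near.
Qed.

End shifted_sandwich.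
End continuous_cdf.

Lemma emax_le (R : realType) m (v : 'I_m -> R) c :
  (emax v <= c%:E)%E <-> forall i, v i <= c.
Proof.
split=> [/bigmax_leP[_ vc] i|vc]; first by rewrite -lee_fin vc.
by apply/bigmax_leP; split=> [|i _]; rewrite ?leNye ?lee_fin.
Qed.

Lemma emax_le_shift (R : realType) m (u v : 'I_m -> R) c e :
  (emax u <= c%:E)%E -> (emax v <= (c + e)%:E)%E \/ exists i, e < `|u i - v i|.
Proof.
move/emax_le=> uc; have [|no_far] := pselect (exists i, e < `|u i - v i|).
  by right.
left; apply/emax_le => i; have := uc i.
have : `|u i - v i| <= e by rewrite leNgt; apply/negP => uv; apply: no_far; exists i.
rewrite ler_norml; lra.
Qed.

Section measurable_events.
Variables (d : measure_display) (T : measurableType d) (R : realType).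

Lemma measurable_emax_le m (Z : 'I_m -> T -> R) c :
  (forall i, measurable_fun setT (Z i)) ->
  measurable [set w | (emax (Z ^~ w) <= c%:E)%E].
Proof.
move=> mZ; rewrite (_ : [set w | _] = \bigcap_(i in setT) (Z i @^-1` `]-oo, c])).
  by apply: fin_bigcap_measurable => // i _; rewrite -[_ @^-1` _]setTI; exact: mZ.
apply/seteqP; split=> w /=.
  by move/emax_le=> Zc i _; rewrite /= in_itv /= Zc.
by move=> Zc; apply/emax_le => i; have := Zc i I; rewrite /= in_itv.
Qed.

Lemma measurable_dist_gt (f g : T -> R) e :
  measurable_fun setT f -> measurable_fun setT g ->
  measurable [set w | e < `|f w - g w|].
Proof.
move=> mf mg; rewrite -[X in measurable X]setTI.
apply: (measurable_fun_ltr (measurable_cst e)) => //.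
exact: measurableT_comp (measurable_funB mf mg).
Qed.

End measurable_events.

Lemma measure_le_setU_bigcup d (T : measurableType d) (R : realType)
    (mu : {measure set T -> \bar R}) m (B C : set T) (A : 'I_m -> set T) :
  measurable B -> (forall i, measurable (A i)) -> measurable C ->
  C `<=` B `|` \bigcup_i A i -> (mu C <= mu B + \sum_(i < m) mu (A i))%E.
Proof.
move=> mB mA mC CBA.
have mUA : measurable (\bigcup_i A i).
  by apply: fin_bigcup_measurable => // i _; exact: mA.
apply: (le_trans (le_measure mu (mem_set mC) (mem_set (measurableU _ _ mB mUA)) CBA)).
apply: (le_trans (measureU2 mu mB mUA)); rewrite leeD2l //.
have -> : (\sum_(i < m) mu (A i) = \sum_(i \in [set: 'I_m]) mu (A i))%E.
  rewrite (fsbigE (enum 'I_m)) ?enum_uniq // => [|i _]; last by rewrite mem_enum.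
  by rewrite (eq_bigl xpredT) ?big_enum // => i; rewrite in_setT.
by apply: content_sub_fsum finite_finset (fun i _ => mA i) mUA _.
Qed.

Section probability_fine.
Variables (d : measure_display) (T : measurableType d) (R : realType).
Variable P : probability T R.

Lemma probability_fine_ge0_le1 A : measurable A -> 0 <= fine (P A) <= 1.
Proof.
move=> mA; rewrite fine_ge0 //=.
by rewrite -[1]/(fine 1%E) fine_le ?fin_num_measure ?probability_le1.
Qed.

Lemma probability_fine_le_setU_bigcup m (B C : set T) (A : 'I_m -> set T) :
  measurable B -> (forall i, measurable (A i)) -> measurable C ->
  C `<=` B `|` \bigcup_i A i ->
  fine (P C) <= fine (P B) + fine (\sum_(i < m) P (A i))%E.
Proof.
move=> mB mA mC CBA; have finS : (\sum_(i < m) P (A i))%E \is a fin_num.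
  by apply/sum_fin_numP => i _ _; exact: fin_num_measure.
rewrite -fineD ?fin_num_measure //.
by rewrite fine_le ?fin_numD ?finS ?fin_num_measure //; exact: measure_le_setU_bigcup.
Qed.

End probability_fine.

Theorem lemma4 (R : realType) (dsp : measure_display) (T : measurableType dsp)
  (P : probability T R) (dim : nat -> nat)
  (X Y : forall n : nat, 'I_(dim n) -> {RV P >-> R})
  (a b : nat -> R) (F : R -> R)
  (hF : is_cdf F) (hFc : continuous F)
  (h1 : forall x : R, 0 < F x < 1 ->
     (fun n => P [set w | (emax (fun i => Y n i w) <= (a n + b n * x)%:E)%E])
       @ \oo --> (F x)%:E)
  (h2 : forall x : R, 0 < F x < 1 -> forall eps : R, 0 < eps ->
     (fun n => (\sum_(i < dim n)
                  P [set w | (eps * b n < `|X n i w - Y n i w|)%R])%E)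
       @ \oo --> 0%E) :
  forall x : R,
    (fun n => P [set w | (emax (fun i => X n i w) <= (a n + b n * x)%:E)%E])
      @ \oo --> (F x)%:E.
Proof.
pose E (Z : forall n, 'I_(dim n) -> {RV P >-> R}) n x :=
  [set w | (emax (fun i => Z n i w) <= (a n + b n * x)%:E)%E].
pose D n e i := [set w | e * b n < `|X n i w - Y n i w|].
have mE Z n x : measurable (E Z n x) by exact: measurable_emax_le.
have mD n e i : measurable (D n e i) by exact: measurable_dist_gt.
have E_shift n x e : E X n x `<=` E Y n (x + e) `|` \bigcup_i D n e i.
  move=> w /(emax_le_shift (fun i => Y n i w) (e * b n)) [Yw|[i XYi]].
    by left; rewrite /E /= mulrDr addrA [b n * e]mulrC.
  by right; exists i.
have E_unshift n x e : E Y n (x - e) `<=` E X n x `|` \bigcup_i D n e i.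
  move=> w /(emax_le_shift (fun i => X n i w) (e * b n)) [Xw|[i XYi]].
    by left; move: Xw; rewrite mulrBr addrA [e * _]mulrC subrK.
  by right; exists i => //; rewrite /D /= distrC.
have [x0 Fx0] := cdf_interior_point hF hFc.
move=> x; apply/fine_cvgP; split.
  by apply: nearW => n; apply: fin_num_measure; exact: mE.
apply: (shifted_sandwich_cvg hF hFc (G := fun n x => fine (P (E X n x)))
  (H := fun n x => fine (P (E Y n x)))
  (s := fun n e => fine (\sum_(i < dim n) P (D n e i))%E)).
- by move=> n y; exact: probability_fine_ge0_le1.
- by move=> n y e; exact: probability_fine_le_setU_bigcup.
- by move=> n y e; exact: probability_fine_le_setU_bigcup.
- by move=> y Fy; exact: fine_cvg (h1 y Fy).
- by move=> e e0; exact: fine_cvg (h2 x0 Fx0 e e0).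
Qed.
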